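(* Let $p,q\in\mathbb C$ with $p\neq0$, and for $\ell\in\frac12\mathbb N_0$ and $m\in\{-\ell,-\ell+1,\dots,\ell\}$ let $\Delta(\ell)_m:=-m^2+|q|^2-|p|^2-2im\,\mathrm{Re}(q)$, and $\langle\ell\rangle:=\sqrt{1+\ell(\ell+1)}$. Then $\Delta(\ell)_m\neq0$ for all $\ell\in\frac12\mathbb N_0$ and all $m\in\{-\ell,\dots,\ell\}$ if and only if one of the following holds: 1. $|p|>|q|$; 2. $|p|<|q|$ and $\mathrm{Re}(q)\neq0$; 3. there exists $M>0$ such that for all $\ell\in\frac12\mathbb N_0$ with $\langle\ell\rangle\ge M$ one has $\big|m^2-(|q|^2-|p|^2)\big|\ge\langle\ell\rangle^{-M}$ for all $m\in\{-\ell,\dots,\ell\}$.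
   Context: Here $m$ ranges over $-\ell\le m\le\ell$ with $\ell-m\in\mathbb N_0$; these quantities arise for the operator $Pu=\partial_0u-qu-p\bar u$ on $\mathrm{SU}(2)$, with $\langle\ell\rangle$ the eigenvalue of $(I-\mathcal L)^{1/2}$ on the matrix entries of the representation $\mathsf t^\ell$. *)

From Stdlib Require Import Reals.
From Coquelicot Require Import Coquelicot.
Open Scope R_scope.

Definition ell_of (n : nat) : R := INR n / 2.

(* m ranges over {-ell, -ell+1, ..., ell}, i.e. ell - m in N_0 and -ell <= m. *)
Definition in_range (n : nat) (m : R) : Prop :=
  exists k : nat, (k <= n)%nat /\ m = ell_of n - INR k.

Definition bracket (n : nat) : R :=
  sqrt (1 + ell_of n * (ell_of n + 1)).

Definition Delta_lm (p q : C) (m : R) : C :=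
  Cminus (RtoC (- m ^ 2 + Cmod q ^ 2 - Cmod p ^ 2))
         (Cmult Ci (RtoC (2 * m * Re q))).

(** The equation [Delta(l)_m = 0] splits into [m^2 = |q|^2 - |p|^2] and
    [m Re q = 0]; as [m] runs over all range points, [m^2] runs over the
    squares [(j/2)^2] of half-integers.  If [|p| > |q|] the first equation has
    no solution, and if [|p| < |q|] with [Re q <> 0] a solution would force
    [m = 0], hence [|p| = |q|].  Otherwise nonvanishing means precisely that
    [D = |q|^2 - |p|^2 > 0] is not a half-integer square; the half-integer
    squares being discrete, [D] then stays at a fixed distance [d > 0] from
    all of them, which beats [<l>^(-M)] as soon as [M >= 1/d].  Conversely
    every range point also belongs to ranges with arbitrarily large [<l>], so
    the decay condition forbids [m^2 = D]. *)
From Stdlib Require Import Reals Lra Lia.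
From Coquelicot Require Import Coquelicot.
Open Scope R_scope.

Lemma Delta_lm_eq0 (p q : C) (m : R) :
  Delta_lm p q m = RtoC 0 <->
  m ^ 2 = Cmod q ^ 2 - Cmod p ^ 2 /\ m * Re q = 0.
Proof.
  unfold Delta_lm, Cminus, Cplus, Copp, Cmult, Ci, RtoC; simpl.
  split.
  - intros E; injection E as E1 E2; split; nra.
  - intros [E1 E2]; f_equal; nra.
Qed.

Lemma in_range_ell (n : nat) : in_range n (ell_of n).
Proof. exists 0%nat; split; [lia | simpl; ring]. Qed.

Lemma in_range_sqr (n : nat) (m : R) :
  in_range n m -> exists j : nat, m ^ 2 = (INR j / 2) ^ 2.
Proof.
  intros [k [Hk ->]]; unfold ell_of.
  destruct (Nat.le_gt_cases (2 * k) n).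
  - exists (n - 2 * k)%nat; rewrite minus_INR, mult_INR by lia; simpl; field.
  - exists (2 * k - n)%nat; rewrite minus_INR, mult_INR by lia; simpl; field.
Qed.

Lemma in_range_add_double (n t : nat) (m : R) :
  in_range n m -> in_range (n + 2 * t) m.
Proof.
  intros [k [Hk ->]]; exists (k + t)%nat; split; [lia |].
  unfold ell_of; rewrite !plus_INR, mult_INR; simpl; field.
Qed.

Lemma ell_of_le_bracket (n : nat) : ell_of n <= bracket n.
Proof.
  assert (Hl : 0 <= ell_of n) by (unfold ell_of; assert (H := pos_INR n); lra).
  unfold bracket; rewrite <- (sqrt_pow2 (ell_of n)) at 1 by exact Hl.
  apply sqrt_le_1_alt; nra.
Qed.

Lemma in_range_large_bracket (n : nat) (m M : R) :
  in_range n m -> exists n' : nat, in_range n' m /\ bracket n' >= M.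
Proof.
  intros Hm.
  destruct (nfloor_ex (Rmax M 0) (Rmax_r M 0)) as [t [_ Ht]].
  exists (n + 2 * S t)%nat; split; [exact (in_range_add_double _ _ _ Hm) |].
  assert (Hell : M <= ell_of (n + 2 * S t)).
  { unfold ell_of; rewrite plus_INR, mult_INR, (S_INR t); change (INR 2) with 2.
    assert (H := pos_INR n); assert (H' := Rmax_l M 0); lra. }
  assert (H := ell_of_le_bracket (n + 2 * S t)); lra.
Qed.

Lemma half_sqr_le (j k : nat) : (j <= k)%nat -> (INR j / 2) ^ 2 <= (INR k / 2) ^ 2.
Proof.
  intros Hjk; apply le_INR in Hjk; assert (H := pos_INR j).
  apply pow_incr; lra.
Qed.

Lemma half_sqr_separated (D : R) :
  0 <= D -> (forall j : nat, (INR j / 2) ^ 2 <> D) ->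
  exists d : R, d > 0 /\ forall j : nat, Rabs ((INR j / 2) ^ 2 - D) >= d.
Proof.
  intros HD Hne.
  assert (Hs : 0 <= 2 * sqrt D) by (assert (H := sqrt_pos D); lra).
  destruct (nfloor_ex _ Hs) as [j0 [Hj0 Hj1]].
  assert (Hsq := sqrt_sqrt D HD); assert (H0 := pos_INR j0).
  assert (Hbelow : (INR j0 / 2) ^ 2 < D).
  { assert (Hle : (INR j0 / 2) ^ 2 <= D) by nra.
    assert (Hj := Hne j0); lra. }
  assert (Habove : D < (INR (S j0) / 2) ^ 2) by (rewrite S_INR; nra).
  exists (Rmin (D - (INR j0 / 2) ^ 2) ((INR (S j0) / 2) ^ 2 - D)); split.
  - apply Rmin_glb_lt; lra.
  - intros j; destruct (Nat.le_gt_cases j j0) as [Hj | Hj].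
    + assert (H := half_sqr_le _ _ Hj); assert (H' := Rmin_l
        (D - (INR j0 / 2) ^ 2) ((INR (S j0) / 2) ^ 2 - D)).
      rewrite Rabs_left1; lra.
    + assert (H := half_sqr_le _ _ Hj); assert (H' := Rmin_r
        (D - (INR j0 / 2) ^ 2) ((INR (S j0) / 2) ^ 2 - D)).
      rewrite Rabs_right; lra.
Qed.

Lemma Rpower_bracket_le_inv (n : nat) (M : R) :
  1 <= M -> bracket n >= M -> Rpower (bracket n) (- M) <= / M.
Proof.
  intros HM Hb.
  apply Rle_trans with (Rpower (bracket n) (- (1))); [apply Rle_Rpower; lra |].
  rewrite Rpower_Ropp, Rpower_1 by lra.
  apply Rinv_le_contravar; lra.
Qed.

Definition decay_gap (D M : R) : Prop :=
  forall n : nat, bracket n >= M ->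
    forall m : R, in_range n m -> Rabs (m ^ 2 - D) >= Rpower (bracket n) (- M).

Lemma decay_gap_of_separated (D : R) :
  0 <= D -> (forall j : nat, (INR j / 2) ^ 2 <> D) ->
  exists M : R, M > 0 /\ decay_gap D M.
Proof.
  intros HD Hne.
  destruct (half_sqr_separated D HD Hne) as [d [Hd Hsep]].
  exists (Rmax 1 (/ d)); split; [assert (H := Rmax_l 1 (/ d)); lra |].
  intros n Hb m Hm.
  destruct (in_range_sqr n m Hm) as [j ->].
  assert (Hpow := Rpower_bracket_le_inv n _ (Rmax_l 1 (/ d)) Hb).
  assert (Hinv : / Rmax 1 (/ d) <= d).
  { rewrite <- (Rinv_inv d) at 2.
    apply Rinv_le_contravar; [apply Rinv_0_lt_compat; lra | apply Rmax_r]. }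
  specialize (Hsep j); lra.
Qed.

Lemma decay_gap_no_root (D M : R) (n : nat) (m : R) :
  decay_gap D M -> in_range n m -> m ^ 2 <> D.
Proof.
  intros Hgap Hm Em.
  destruct (in_range_large_bracket n m M Hm) as [n' [Hm' Hb]].
  specialize (Hgap n' Hb m Hm').
  rewrite Em, Rminus_diag, Rabs_R0 in Hgap.
  assert (H := exp_pos (- M * ln (bracket n'))); unfold Rpower in Hgap; lra.
Qed.

Theorem proposition5p2 (p q : C) (hp : p <> RtoC 0) :
  (forall (n : nat) (m : R), in_range n m -> Delta_lm p q m <> RtoC 0)
  <->
  (Cmod p > Cmod q
   \/ (Cmod p < Cmod q /\ Re q <> 0)
   \/ (exists M : R, M > 0 /\
         forall n : nat, bracket n >= M ->
           forall m : R, in_range n m ->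
             Rabs (m ^ 2 - (Cmod q ^ 2 - Cmod p ^ 2)) >= Rpower (bracket n) (- M))).
Proof.
  assert (Hp := Cmod_ge_0 p); assert (Hq := Cmod_ge_0 q).
  split.
  - intros Hnz.
    destruct (Rlt_or_le (Cmod q) (Cmod p)) as [Hlt | Hle]; [now left |].
    destruct (Req_dec (Cmod p) (Cmod q)) as [Heq | Hneq].
    { exfalso; apply (Hnz 0%nat (ell_of 0) (in_range_ell 0)), Delta_lm_eq0.
      unfold ell_of; rewrite Heq; simpl; split; field. }
    destruct (Req_dec (Re q) 0) as [Hre | Hre]; [| right; left; split; lra].
    right; right; apply decay_gap_of_separated; [nra |].
    intros j Ej; apply (Hnz j (ell_of j) (in_range_ell j)), Delta_lm_eq0.
    rewrite Hre; split; [exact Ej | ring].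
  - intros Hcases n m Hm Hz; apply Delta_lm_eq0 in Hz as [Em Ere].
    destruct Hcases as [Hgt | [[Hlt Hre] | [M [_ Hgap]]]].
    + assert (H := pow2_ge_0 m); nra.
    + assert (m <> 0) by (intros ->; nra).
      apply Hre, (Rmult_eq_reg_l m); lra.
    + exact (decay_gap_no_root _ M n m Hgap Hm Em).
Qed.
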